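(* Let $P=P(G,[\omega])$ be a toric poset over $V$, and let $S\subseteq V$ be nonempty and either a toric interval $[i,j]^{\mathrm{tor}}$ of $P$ or a geometric toric antichain of $P$. Then the partition $\pi_S=\{S\}\cup\{\{v\}:v\in V\setminus S\}$ is closed with respect to $P$; that is, contracting $S$ defines a toric (quotient) morphism.
   Context: Toric poset setup: $V=[n]$; $\mathrm{Acyc}(G)$ acyclic orientations; $[\omega]$ the class under the equivalence generated by converting a source into a sink; toric chambers (components of $\mathbb{R}^V/\mathbb{Z}^V$ minus the hyperplanes $\{x_i\equiv x_j\bmod 1\}$, $\{i,j\}\in E$) correspond bijectively to classes $[\omega]$; $P(G,[\omega])$ is identified with its chamber $c(P)$. $D_\pi$, $D^{\mathrm{tor}}_\pi$ as usual ($x_i=x_j$ for $i,j$ in common blocks). Toric closure $\mathrm{cl}^{\mathrm{tor}}_P(\pi)$: coarsest $\bar\pi\ge\pi$ with $\overline{c(P)}\cap D^{\mathrm{tor}}_{\bar\pi}=\overline{c(P)}\cap D^{\mathrm{tor}}_\pi$; closed means $\pi=\mathrm{cl}^{\mathrm{tor}}_P(\pi)$; toric quotient morphisms are projections onto $D^{\mathrm{tor}}_\pi$ for closed $\pi$. Toric chain: $C=\{i_1,\dots,i_m\}$ with a cyclic class $[(i_1,\dots,i_m)]$ such that every $x\in c(P)$ (coordinates in $[0,1)$) has a cyclic shift $(j_1,\dots,j_m)$ with $0\le x_{j_1}<\dots<x_{j_m}<1$; $P|_C$ denotes this class. Toric interval: $[i,i]^{\mathrm{tor}}=\{i\}$;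 for $i\neq j$, empty if $\{i,j\}$ is not a toric chain, else $\{i,j\}\cup\{k:P|_{\{i,j,k\}}=[(i,k,j)]\}$. Geometric toric antichain: $A\subseteq V$ such that $D^{\mathrm{tor}}_{\pi_A}$ intersects the open chamber $c(P)$. *)

From mathcomp Require Import all_boot.
From Stdlib Require Import Reals Relation_Operators.

Set Implicit Arguments.
Unset Strict Implicit.

Local Open Scope R_scope.

Section TorDefs.
Variable n : nat.
Notation V := ('I_n).

(* A point of R^V; the torus R^V/Z^V is handled through Z^V-periodic
   subsets of R^V (lifts). *)
Definition pt := V -> R.

Definition is_int (r : R) : Prop := exists k : Z, r = IZR k.

Definition simple_graph (E : V -> V -> Prop) : Prop :=
  (forall i j, E i j -> E j i) /\ (forall i, ~ E i i).

Definition acyc_orient (E om : V -> V -> Prop) : Prop :=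
  (forall i j, om i j -> E i j) /\
  (forall i j, E i j -> (om i j \/ om j i)) /\
  (forall i j, om i j -> ~ om j i) /\
  (forall i, ~ clos_trans V om i i).

Definition avoid (E : V -> V -> Prop) (x : pt) : Prop :=
  forall i j, E i j -> ~ is_int (x i - x j).

(* x and y (mod Z^V) lie in the same connected (= path) component of the
   complement of the toric arrangement: a continuous path in R^V from x to
   a lift of y avoiding the (lifted) hyperplanes. *)
Definition same_comp (E : V -> V -> Prop) (x y : pt) : Prop :=
  exists g : R -> pt,
    (forall i, continuity (fun t => g t i)) /\
    (forall i, g 0 i = x i) /\
    (forall i, is_int (g 1 i - y i)) /\
    (forall t, 0 <= t <= 1 -> avoid E (g t)).

(* Lift to R^V of the toric chamber c(P) of P = P(G,[omega]): the component
   of the complement containing the image of the points of the open unit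
   cube lying in the graphic chamber of omega. *)
Definition tchamber (E om : V -> V -> Prop) (x : pt) : Prop :=
  avoid E x /\
  exists y : pt, (forall i, 0 < y i < 1) /\
                 (forall i j, om i j -> y i < y j) /\
                 same_comp E y x.

Definition in_closure (E om : V -> V -> Prop) (x : pt) : Prop :=
  forall eps, 0 < eps ->
    exists y, tchamber E om y /\ forall i, Rabs (x i - y i) < eps.

Definition is_partition (p : V -> V -> Prop) : Prop :=
  (forall i, p i i) /\ (forall i j, p i j -> p j i) /\
  (forall i j k, p i j -> p j k -> p i k).

Definition coarser (p q : V -> V -> Prop) : Prop := forall i j, p i j -> q i j.

Definition Dtor (p : V -> V -> Prop) (x : pt) : Prop :=
  forall i j, p i j -> is_int (x i - x j).

Definition tor_closed (E om : V -> V -> Prop) (p : V -> V -> Prop) : Prop :=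
  forall q, is_partition q -> coarser p q ->
    (forall x, (in_closure E om x /\ Dtor q x) <-> (in_closure E om x /\ Dtor p x)) ->
    forall i j, q i j -> p i j.

Definition piS (S : V -> Prop) : V -> V -> Prop :=
  fun i j => i = j \/ (S i /\ S j).

Fixpoint incr (x : pt) (l : seq V) : Prop :=
  match l with
  | a :: ((b :: _) as l') => x a < x b /\ incr x l'
  | _ => True
  end.

(* Toric chain C = elements of l with P|_C = [l] (cyclic class of l). *)
Definition tchain (E om : V -> V -> Prop) (l : seq V) : Prop :=
  uniq l /\
  forall x, tchamber E om x -> (forall v, 0 <= x v < 1) ->
    exists r, (r < size l)%nat /\ incr x (rot r l).

Definition tinterval (E om : V -> V -> Prop) (i j : V) (k : V) : Prop :=
  (i = j /\ k = i) \/
  (i <> j /\ tchain E om [:: i; j] /\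
     (k = i \/ k = j \/ (k <> i /\ k <> j /\ tchain E om [:: i; k; j]))).

Definition geom_antichain (E om : V -> V -> Prop) (A : V -> Prop) : Prop :=
  exists x, tchamber E om x /\ Dtor (piS A) x.

End TorDefs.

From mathcomp Require Import all_boot.
From Stdlib Require Import Reals Relation_Operators Lra Lia Classical ClassicalEpsilon.

(* To show that pi_S is closed it suffices, for every a outside S, to find a
   point X of the closure of c(P) on which S collapses modulo 1 while X_a is
   distinct modulo 1 from every other coordinate.  Inside a unit window
   [c, c+1) membership in c(P) only depends on the strict order of the
   coordinates, so such an X is obtained from a chamber point z by any
   weakly order-preserving map followed by a small push of X_a.  For a
   geometric antichain z already collapses S; for a toric interval [i,j] a
   chamber point witnessing that [i,a,j] is not a toric chain puts S inside
   [z_i, z_j] and a outside (z_i, z_j), so S can be squeezed onto z_j. *)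

Set Implicit Arguments.
Unset Strict Implicit.

Local Open Scope R_scope.

Lemma is_int_add a b : is_int a -> is_int b -> is_int (a + b).
Proof. by move=> [k ->] [l ->]; exists (k + l)%Z; rewrite plus_IZR. Qed.

Lemma is_int_sub a b : is_int a -> is_int b -> is_int (a - b).
Proof. by move=> [k ->] [l ->]; exists (k - l)%Z; rewrite minus_IZR. Qed.

Lemma is_int_diag a : is_int (a - a).
Proof. by exists 0%Z; rewrite Rminus_diag. Qed.

Lemma window_noint c u v :
  c <= u < c + 1 -> c <= v < c + 1 -> u <> v -> ~ is_int (u - v).
Proof.
move=> Hu Hv Nuv [k Hk].
have /lt_IZR Hk1 : IZR k < 1 by lra.
have /lt_IZR Hk2 : IZR (-1) < IZR k by rewrite /=; lra.
have Hk0 : k = 0%Z by lia.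
by move: Hk; rewrite Hk0 /=; lra.
Qed.

Lemma convex_window c s a b :
  0 <= s <= 1 -> c <= a < c + 1 -> c <= b < c + 1 -> c <= (1 - s) * a + s * b < c + 1.
Proof.
move=> Hs Ha Hb.
have : 0 <= (1 - s) * (a - c) by apply: Rmult_le_pos; lra.
have : 0 <= s * (b - c) by apply: Rmult_le_pos; lra.
have : 0 <= (1 - s) * (c + 1 - a) by apply: Rmult_le_pos; lra.
have : 0 <= s * (c + 1 - b) by apply: Rmult_le_pos; lra.
have [->|Hs0] := Req_dec s 0; first lra.
have : 0 < s * (c + 1 - b) by apply: Rmult_lt_0_compat; lra.
lra.
Qed.

Lemma convex_le_lt s a1 a2 b1 b2 :
  0 < s <= 1 -> a1 <= a2 -> b1 < b2 -> (1 - s) * a1 + s * b1 < (1 - s) * a2 + s * b2.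
Proof. by move=> *; nra. Qed.

Lemma convex_lt s a1 a2 b1 b2 :
  0 <= s <= 1 -> a1 < a2 -> b1 < b2 -> (1 - s) * a1 + s * b1 < (1 - s) * a2 + s * b2.
Proof.
move=> Hs Ha Hb; have [->|Hs0] := Req_dec s 0; first lra.
by apply: convex_le_lt; lra.
Qed.

(* ramp_lo t = min (2t) 1 and ramp_hi t = max (2t - 1) 0, written with Rabs so
   that [reg] proves their continuity; they parametrize a concatenation of two
   paths. *)
Definition ramp_lo (t : R) := (2 * t + 1 - Rabs (2 * t - 1)) / 2.
Definition ramp_hi (t : R) := (2 * t - 1 + Rabs (2 * t - 1)) / 2.

Lemma ramps_first_half t : t <= 1 / 2 -> ramp_lo t = 2 * t /\ ramp_hi t = 0.
Proof. by move=> Ht; rewrite /ramp_lo /ramp_hi Rabs_left1; [split; lra | lra]. Qed.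

Lemma ramps_second_half t : 1 / 2 <= t -> ramp_lo t = 1 /\ ramp_hi t = 2 * t - 1.
Proof. by move=> Ht; rewrite /ramp_lo /ramp_hi Rabs_right; [split; lra | lra]. Qed.

Lemma finite_pos_lower_bound (T : finType) (f : T -> R) :
  (forall v, 0 < f v) -> exists e, 0 < e /\ forall v, e <= f v.
Proof.
move=> Hf.
suff [e [He Hs]] : exists e, 0 < e /\ forall v, v \in enum T -> e <= f v.
  by exists e; split=> // v; apply: Hs; rewrite mem_enum.
elim: (enum T) => [|a s [e [He IH]]]; first by exists 1; split=> //; lra.
exists (Rmin e (f a)); split; first exact: Rmin_pos.
move=> v; rewrite in_cons => /orP [/eqP ->|Hv]; first exact: Rmin_r.
exact: Rle_trans (Rmin_l _ _) (IH v Hv).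
Qed.

Definition asbool (P : Prop) : bool :=
  if excluded_middle_informative P then true else false.

Lemma asboolP (P : Prop) : reflect P (asbool P).
Proof. by rewrite /asbool; case: excluded_middle_informative => H; constructor. Qed.

Section TorChambers.
Context {n : nat} {E om : 'I_n -> 'I_n -> Prop}.
Implicit Types (x y z w : pt n) (S : 'I_n -> Prop).

Definition in_window (c : R) x := forall v, c <= x v < c + 1.
Definition int_translate x y := forall v, is_int (y v - x v).
Definition preserves_lt z w := forall u v, z u < z v -> w u < w v.
Definition preserves_le z w := forall u v, z u < z v -> w u <= w v.

Lemma window_rep x c : exists z, in_window c z /\ int_translate x z.
Proof.
exists (fun v => x v - IZR (up (x v - c) - 1)); split => v.
- by rewrite minus_IZR; have := archimed (x v - c); rewrite /=; lra.
- by exists (- (up (x v - c) - 1))%Z; rewrite opp_IZR; ring.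
Qed.

Lemma Dtor_shift (p : 'I_n -> 'I_n -> Prop) x y :
  Dtor p x -> int_translate x y -> Dtor p y.
Proof.
move=> HD Hxy u v Huv.
have -> : y u - y v = (y u - x u) - (y v - x v) + (x u - x v) by ring.
by apply: is_int_add; [apply: is_int_sub|apply: HD].
Qed.

Lemma avoid_shift x y : avoid E x -> int_translate x y -> avoid E y.
Proof.
move=> Hx Hxy u v Euv Hy; apply: (Hx u v Euv).
have -> : x u - x v = (y u - y v) - (y u - x u) + (y v - x v) by ring.
by apply: is_int_add => //; apply: is_int_sub.
Qed.

Lemma avoid_window c x :
  in_window c x -> (forall u v, E u v -> x u <> x v) -> avoid E x.
Proof. by move=> Wx Hx u v Euv; apply: window_noint; [apply: Wx|apply: Wx|apply: Hx]. Qed.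

Lemma tchamber_edge_neq z u v : tchamber E om z -> E u v -> z u <> z v.
Proof. by move=> [Hav _] Euv Hzuv; apply: (Hav u v Euv); rewrite Hzuv; apply: is_int_diag. Qed.

Lemma tchamber_shift x y : tchamber E om x -> int_translate x y -> tchamber E om y.
Proof.
move=> [Hav [y0 [Hy0 [Hom0 [g [Hgc [Hg0 [Hg1 Hgav]]]]]]]] Hxy.
split; first exact: avoid_shift Hav Hxy.
exists y0; do 2 split=> //; exists g; do 3 split=> //.
move=> i; have -> : g 1 i - y i = (g 1 i - x i) - (y i - x i) by ring.
exact: is_int_sub.
Qed.

Lemma tchamber_path z w (f : R -> pt n) :
  tchamber E om z -> (forall i, continuity (fun t => f t i)) ->
  (forall i, f 0 i = z i) -> (forall i, f 1 i = w i) ->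
  (forall t, 0 <= t <= 1 -> avoid E (f t)) -> tchamber E om w.
Proof.
move=> [_ [y [Hy [Hyom [g [Hgc [Hg0 [Hg1 Hgav]]]]]]]] Hfc Hf0 Hf1 Hfav.
have Hw : avoid E w.
  by apply: (avoid_shift (Hfav 1 ltac:(lra))) => i; rewrite Hf1; apply: is_int_diag.
split=> //; exists y; do 2 split=> //.
exists (fun t i => g (ramp_lo t) i + (f (ramp_hi t) i - z i)); split; [|split; [|split]].
- move=> i; apply: (continuity_plus (fun t => g (ramp_lo t) i)).
    by apply: (continuity_comp ramp_lo (fun s => g s i)) => //; rewrite /ramp_lo; reg.
  apply: (continuity_minus (fun t => f (ramp_hi t) i)); last exact: continuity_const.
  by apply: (continuity_comp ramp_hi (fun s => f s i)) => //; rewrite /ramp_hi; reg.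
- move=> i; have [-> ->] := @ramps_first_half 0 ltac:(lra).
  by rewrite Rmult_0_r Hg0 Hf0; ring.
- move=> i; have [-> ->] := @ramps_second_half 1 ltac:(lra).
  have -> : 2 * 1 - 1 = 1 by ring.
  by rewrite Hf1; have -> : g 1 i + (w i - z i) - w i = g 1 i - z i by ring.
- move=> t Ht; have [Hlo|Hhi] := Rle_lt_dec t (1 / 2).
  + have [-> ->] := ramps_first_half Hlo.
    apply: (avoid_shift (Hgav (2 * t) ltac:(lra))) => i.
    by rewrite Hf0 Rminus_diag Rplus_0_r; apply: is_int_diag.
  + have [-> ->] := ramps_second_half (Rlt_le _ _ Hhi).
    apply: (avoid_shift (Hfav (2 * t - 1) ltac:(lra))) => i.
    by have -> : g 1 i + (f (2 * t - 1) i - z i) - f (2 * t - 1) i = g 1 i - z i by ring.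
Qed.

Lemma tchamber_window_move c z w :
  tchamber E om z -> in_window c z -> in_window c w -> preserves_lt z w ->
  tchamber E om w.
Proof.
move=> Hz Wz Ww Hzw.
apply: (tchamber_path (f := fun r i => (1 - r) * z i + r * w i) Hz) => [i|i|i|r Hr].
- by reg.
- by ring.
- by ring.
- apply: (avoid_window (c := c)) => [v|u v Euv]; first exact: convex_window.
  have := tchamber_edge_neq Hz Euv.
  by case: (Rtotal_order (z u) (z v)) => [Hl|[//|Hl]] _;
     have := convex_lt Hr Hl (Hzw _ _ Hl); lra.
Qed.

Lemma in_closure_monotone c z y :
  tchamber E om z -> in_window c z -> in_window c y -> preserves_le z y ->
  in_closure E om y.
Proof.
move=> Hz Wz Wy Hzy eps Heps.
pose s := Rmin 1 eps.
have Hs : 0 < s <= 1 by split; [apply: Rmin_pos; lra | apply: Rmin_l].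
have Hse : s <= eps by apply: Rmin_r.
exists (fun v => (1 - s) * y v + s * z v); split.
  apply: (tchamber_window_move Hz Wz) => [v|u v Huv].
    by apply: convex_window; [lra|apply: Wy|apply: Wz].
  exact: convex_le_lt Hs (Hzy _ _ Huv) Huv.
move=> v; have -> : y v - ((1 - s) * y v + s * z v) = s * (y v - z v) by ring.
rewrite Rabs_mult Rabs_pos_eq; last lra.
have : Rabs (y v - z v) < 1 by apply: Rabs_def1; have := Wy v; have := Wz v; lra.
by nra.
Qed.

Lemma exists_raise c y a :
  in_window c y ->
  exists eta, 0 < eta /\ y a + eta < c + 1 /\ forall v, y a < y v -> y a + eta < y v.
Proof.
move=> Wy.
pose gap v := if Rlt_dec (y a) (y v) then y v - y a else 1.
have [e [He Hgap]] : exists e, 0 < e /\ forall v, e <= gap v.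
  by apply: finite_pos_lower_bound => v; rewrite /gap; case: Rlt_dec => H /=; lra.
have Hca : 0 < c + 1 - y a by have := Wy a; lra.
have Hm := Rmin_pos _ _ He Hca.
have := Rmin_l e (c + 1 - y a); have := Rmin_r e (c + 1 - y a) => Hr Hl.
exists (Rmin e (c + 1 - y a) / 2); split; [lra | split; first lra].
by move=> v Hv; have := Hgap v; rewrite /gap; case: Rlt_dec => H /=; lra.
Qed.

Definition separates S a :=
  exists X, in_closure E om X /\ Dtor (piS S) X /\ forall b, b <> a -> ~ is_int (X a - X b).

Lemma separates_of_monotone c z y S a :
  tchamber E om z -> in_window c z -> in_window c y -> preserves_le z y ->
  (forall v, z a < z v -> y a < y v) -> Dtor (piS S) y -> ~ S a -> separates S a.
Proof.
move=> Hz Wz Wy Hzy Hza Hy Sa.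
have [eta [Heta [Hup Hgap]]] := exists_raise a Wy.
pose X v := if v == a then y a + eta else y v.
have Xa : X a = y a + eta by rewrite /X eqxx.
have Xo v : v <> a -> X v = y v by rewrite /X => /eqP/negbTE ->.
have WX : in_window c X.
  move=> v; case: (eqVneq v a) => [->|/eqP Hv]; last by rewrite Xo.
  by rewrite Xa; have := Wy a; lra.
exists X; split; [|split].
- apply: (in_closure_monotone Hz Wz WX) => u v Huv.
  case: (eqVneq u a) => [Eu|/eqP Hu]; case: (eqVneq v a) => [Ev|/eqP Hv].
  + by move: Huv; rewrite Eu Ev; lra.
  + by rewrite Eu Xa Xo //; apply/Rlt_le/Hgap/Hza; rewrite -Eu.
  + by rewrite Ev Xa Xo //; have := Hzy _ _ Huv; rewrite Ev; lra.
  + by rewrite !Xo //; apply: Hzy.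
- move=> u v [->|[Su Sv]]; first exact: is_int_diag.
  by rewrite !Xo; [apply: Hy; right|move=> E'; apply: Sa; rewrite -E'..].
- move=> b Nba; apply: (window_noint (WX a) (WX b)); rewrite Xa Xo //.
  by case: (Rle_lt_dec (y b) (y a)) => [|/Hgap]; lra.
Qed.

Lemma antichain_separates S a : geom_antichain E om S -> ~ S a -> separates S a.
Proof.
move=> [x [Hx HD]] Sa; have [z [Wz Hxz]] := window_rep x (x a).
apply: (separates_of_monotone (tchamber_shift Hx Hxz) Wz Wz) => //.
- by move=> u v /Rlt_le.
- exact: Dtor_shift HD Hxz.
Qed.

Lemma collapse_separates c t z S a :
  tchamber E om z -> in_window c z -> c < t < c + 1 ->
  (forall s, S s -> z s <= t) -> z a = c \/ t <= z a -> ~ S a -> separates S a.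
Proof.
move=> Hz Wz Ht HSt Hza Sa.
pose y v := if v == a then z a else Rmax (z v) t.
have ya : y a = z a by rewrite /y eqxx.
have yo v : v <> a -> y v = Rmax (z v) t by rewrite /y => /eqP/negbTE ->.
have Hmax v : c <= Rmax (z v) t < c + 1.
  split; first exact: Rle_trans (Rlt_le _ _ (proj1 Ht)) (Rmax_r _ _).
  by apply: Rmax_lub_lt; [exact: (proj2 (Wz v)) | lra].
have Hya v : z a < z v -> y a < y v.
  move=> Hav; have Nva : v <> a by move=> Eva; move: Hav; rewrite Eva; lra.
  rewrite ya yo //; have := Rmax_r (z v) t; have := Rmax_l (z v) t; have := Wz a; lra.
apply: (separates_of_monotone Hz Wz _ _ Hya) => //.
- move=> v; case: (eqVneq v a) => [->|/eqP Hv]; first by rewrite ya; apply: Wz.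
  by rewrite yo //; apply: Hmax.
- move=> u v Huv; case: (eqVneq u a) => [Eu|/eqP Hu].
    by rewrite Eu; apply/Rlt_le/Hya; rewrite -Eu.
  case: (eqVneq v a) => [Ev|/eqP Hv]; last by rewrite !yo //; apply/Rle_max_compat_r/Rlt_le.
  rewrite Ev ya yo //; move: Huv; rewrite Ev => Huv; apply: Rmax_lub; first lra.
  by case: Hza => // Hc; have := Wz u; lra.
- move=> u v [->|[Su Sv]]; first exact: is_int_diag.
  have Nua : u <> a by move=> Eua; apply: Sa; rewrite -Eua.
  have Nva : v <> a by move=> Eva; apply: Sa; rewrite -Eva.
  by rewrite !yo // !Rmax_right; [apply: is_int_diag|apply: HSt..].
Qed.

Definition cyclic x (l : seq 'I_n) := exists r, (r < size l)%nat /\ incr x (rot r l).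

Definition rewindow x (c : R) : pt n := fun v => if Rle_dec c (x v) then x v else x v + 1.

Lemma rewindow_window x u :
  (forall v, 0 <= x v < 1) -> in_window (x u) (rewindow x (x u)).
Proof.
by move=> H01 v; have := H01 u; have := H01 v; rewrite /rewindow; case: Rle_dec => H /=; lra.
Qed.

Lemma rewindow_translate x c : int_translate x (rewindow x c).
Proof.
move=> v; rewrite /rewindow; case: Rle_dec => _ /=; first exact: is_int_diag.
by exists 1%Z; rewrite /=; ring.
Qed.

Lemma rewindow_base x u : rewindow x (x u) u = x u.
Proof. by rewrite /rewindow; case: Rle_dec => H //=; case: H; apply: Rle_refl. Qed.

Lemma cyclic2_rewindow x u v :
  (forall v, 0 <= x v < 1) -> cyclic x [:: u; v] ->
  rewindow x (x u) u < rewindow x (x u) v.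
Proof.
move=> H01 [[|[|r]] [Hr /= Hinc]] //; rewrite /rewindow;
  do 2 (case: Rle_dec => ? /=); have := H01 u; have := H01 v; lra.
Qed.

Lemma cyclic3_rewindow x (u v w : 'I_n) :
  (forall v, 0 <= x v < 1) ->
  cyclic x [:: u; v; w] <->
  let z := rewindow x (x u) in z u < z v < z w.
Proof.
move=> H01; have := H01 u; have := H01 v; have := H01 w; rewrite /rewindow /= => Hw Hv Hu.
split.
- by move=> [[|[|[|r]]] [Hr /= Hinc]] //; do 3 (case: Rle_dec => ? /=); lra.
- do 3 (case: Rle_dec => ? /=); move=> Hz;
    first [lra | by exists 0%nat; split=> //=; lra | by exists 1%nat; split=> //=; lra
           | by exists 2%nat; split=> //=; lra].
Qed.

Lemma interval_separates i j S a :
  (forall k, S k <-> tinterval E om i j k) -> i <> j -> tchain E om [:: i; j] ->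
  ~ S a -> separates S a.
Proof.
move=> HS Nij Hch Sa.
have Si : S i by apply/HS; rewrite /tinterval; right; do 2 split=> //; left.
have Sj : S j by apply/HS; rewrite /tinterval; right; do 2 split=> //; right; left.
have Nai : a <> i by move=> Eai; apply: Sa; rewrite Eai.
have Naj : a <> j by move=> Eaj; apply: Sa; rewrite Eaj.
have [x [Hx [H01 Hnc]]] :
    exists x, tchamber E om x /\ (forall v, 0 <= x v < 1) /\ ~ cyclic x [:: i; a; j].
  apply: NNPP => Hno; apply: Sa; apply/HS; rewrite /tinterval.
  right; do 2 split=> //; do 2 right; do 2 split=> //; split.
    by rewrite /= !inE !negb_or; do ![apply/andP; split]; apply/eqP => // E'; auto.
  by move=> y Hy Hy01; apply: NNPP => Hc; apply: Hno; exists y.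
pose z := rewindow x (x i).
have Wz : in_window (x i) z := rewindow_window i H01.
have zi : z i = x i := rewindow_base x i.
have zj : x i < z j by rewrite -zi; apply: cyclic2_rewindow; last apply: (proj2 Hch).
apply: (collapse_separates (t := z j) (tchamber_shift Hx (rewindow_translate x (x i))) Wz)
  => //; rewrite -/z.
- by have := Wz j; lra.
- move=> s /HS [[Eij _]//|[_ [_ [->|[->|[_ [_ [_ Hisj]]]]]]]]; [lra|lra|].
  by have := proj1 (cyclic3_rewindow i s j H01) (Hisj x Hx H01); rewrite /= -/z; lra.
- have : ~ (z i < z a < z j) by move=> H; apply/Hnc/(cyclic3_rewindow i a j H01).
  by have := Wz a; rewrite zi; lra.
Qed.

Definition height v : nat := #|[pred w | asbool (clos_trans _ om w v)]|.

Lemma height_lt u v :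
  (forall i, ~ clos_trans _ om i i) -> om u v -> (height u < height v)%nat.
Proof.
move=> Hac Huv; apply: proper_card; apply/properP; split.
  apply/subsetP => w; rewrite !inE => /asboolP Hwu.
  by apply/asboolP; apply: t_trans Hwu (t_step _ _ _ _ Huv).
exists u; rewrite !inE; first by apply/asboolP; apply: t_step.
by apply/asboolP/Hac.
Qed.

Lemma chamber_exists : acyc_orient E om -> exists y, tchamber E om y.
Proof.
move=> [_ [Hedge [_ Hac]]].
pose y v := INR (height v).+1 / INR n.+2.
have Hd : 0 < INR n.+2 by apply: lt_0_INR; lia.
have Hy v : 0 < y v < 1.
  have : (height v <= n)%nat by rewrite -[X in (_ <= X)%nat]card_ord; apply: max_card.
  move/leP => Hh; split; first by apply: Rdiv_lt_0_compat => //; apply: lt_0_INR; lia.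
  have : INR (height v).+1 < INR n.+2 by apply: lt_INR; lia.
  by rewrite /y => Hlt; apply: (Rmult_lt_reg_r (INR n.+2)) => //;
     rewrite /Rdiv Rmult_assoc Rinv_l; lra.
have Hom u v : om u v -> y u < y v.
  move=> /(height_lt Hac)/ltP Huv; apply: Rmult_lt_compat_r; first exact: Rinv_0_lt_compat.
  by apply: lt_INR; lia.
have Hav : avoid E y.
  apply: (avoid_window (c := 0)) => [v|u v Euv]; first by have := Hy v; lra.
  by case: (Hedge u v Euv) => /Hom; lra.
exists y; split=> //; exists y; do 2 split=> //.
exists (fun _ => y); split; [|split; [|split]] => [i|i|i|t _] //.
- exact: continuity_const.
- exact: is_int_diag.
Qed.

Lemma geom_antichain_subsingleton S :
  acyc_orient E om -> (forall u v, S u -> S v -> u = v) -> geom_antichain E om S.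
Proof.
move=> Hom HS; have [y Hy] := chamber_exists Hom; exists y; split=> //.
by move=> u v [->|[Su Sv]]; rewrite ?(HS u v Su Sv); apply: is_int_diag.
Qed.

Lemma tor_closed_piS S : (forall a, ~ S a -> separates S a) -> tor_closed E om (piS S).
Proof.
move=> Hsep q [_ [Hqsym _]] _ Hq u v Huv; apply: NNPP => Npuv.
have [a [b [Sa [Nab Hab]]]] : exists a b, ~ S a /\ a <> b /\ q a b.
  case: (classic (S u)) => Su.
    exists v, u; split; [|split; last exact: Hqsym].
    - by move=> Sv; apply: Npuv; right.
    - by move=> Evu; apply: Npuv; left.
  by exists u, v; split; [|split] => // Euv; apply: Npuv; left.
have [X [HXcl [HX Hsep']]] := Hsep a Sa.
apply: (Hsep' b (nesym Nab)).
by have [_ HXq] := proj2 (Hq X) (conj HXcl HX); apply: HXq.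
Qed.

End TorChambers.

Unset Implicit Arguments.

Theorem mainTheorem11 (n : nat) (E om : 'I_n -> 'I_n -> Prop)
  (HG : simple_graph E) (Hom : acyc_orient E om)
  (S : 'I_n -> Prop) (HSne : exists v, S v)
  (HS : (exists i j : 'I_n, forall k, S k <-> tinterval E om i j k)
        \/ geom_antichain E om S) :
  tor_closed E om (piS S).
Proof.
apply: tor_closed_piS => a Sa.
case: HS => [[i [j HSij]]|Hanti]; last exact: antichain_separates.
case: (eqVneq i j) => [Eij|/eqP Nij].
- subst j; apply: antichain_separates Sa; apply: geom_antichain_subsingleton Hom _.
  by move=> u v /HSij [[_ ->]|[]] // /HSij [[_ ->]|[]].
- apply: (interval_separates HSij Nij _ Sa).
  by case: HSne => s /HSij [[]|[_ []]].
Qed.
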